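(* Let $\xi \in \Phi_{\rm BYG}$. Then $m_{\rm crit} > 2 \delta_R$.
   Context: Parameters $\xi = (\tau_L, \delta_L, \tau_R, \delta_R)$ of the map $f_\xi(x,y) = (\tau_L x + y + 1, -\delta_L x)$ for $x \le 0$ and $(\tau_R x + y + 1, -\delta_R x)$ for $x \ge 0$. Let $\Phi = \{ \xi \mid \tau_L > \delta_L + 1, \delta_L > 0, \tau_R < -(\delta_R + 1), \delta_R > 0 \}$. Let $0 < \lambda_L^s < 1 < \lambda_L^u$ be the eigenvalues of $A_L = \begin{bmatrix} \tau_L & 1 \\ -\delta_L & 0 \end{bmatrix}$. Define $\phi(\xi) = \delta_R - \left( \tau_R + \delta_L + \delta_R - (1 + \tau_R) \lambda_L^u \right) \lambda_L^u$ and $\Phi_{\rm BYG} = \{ \xi \in \Phi \mid \phi(\xi) > 0 \}$. Define $m_{\rm crit} = \lambda_L^s + \frac{2 \tau_L}{(\lambda_L^u)^2 - 1}$. *)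

From Stdlib Require Import Reals Lra.
Open Scope R_scope.

(* Parameter vector xi = (tauL, deltaL, tauR, deltaR). *)
Definition in_Phi (tauL deltaL tauR deltaR : R) : Prop :=
  tauL > deltaL + 1 /\ deltaL > 0 /\ tauR < - (deltaR + 1) /\ deltaR > 0.

(* Eigenvalues of A_L = [[tauL, 1], [-deltaL, 0]]: the roots of the
   characteristic polynomial l^2 - tauL l + deltaL.  On Phi the discriminant
   tauL^2 - 4 deltaL is positive and 0 < lambda_s < 1 < lambda_u. *)
Definition lamLu (tauL deltaL : R) : R :=
  (tauL + sqrt (tauL ^ 2 - 4 * deltaL)) / 2.
Definition lamLs (tauL deltaL : R) : R :=
  (tauL - sqrt (tauL ^ 2 - 4 * deltaL)) / 2.

Definition phi (tauL deltaL tauR deltaR : R) : R :=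
  let lu := lamLu tauL deltaL in
  deltaR - (tauR + deltaL + deltaR - (1 + tauR) * lu) * lu.

Definition in_Phi_BYG (tauL deltaL tauR deltaR : R) : Prop :=
  in_Phi tauL deltaL tauR deltaR /\ phi tauL deltaL tauR deltaR > 0.

Definition m_crit (tauL deltaL : R) : R :=
  lamLs tauL deltaL + 2 * tauL / ((lamLu tauL deltaL) ^ 2 - 1).

(* By Vieta, u := lamLu and s := lamLs satisfy u + s = tauL and u s = deltaL,
   and (u - 1)(s - 1) = 1 - tauL + deltaL < 0 puts 1 strictly between them,
   while u s > 0 gives s > 0.  Expanding phi and using tauR < -(deltaR + 1),
   phi > 0 yields deltaR (u^2 - 1) < u - s u^2; hence
   (m_crit - 2 deltaR)(u^2 - 1) = s (u^2 - 1) + 2 (u + s) - 2 deltaR (u^2 - 1)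
   exceeds 3 s u^2 + s > 0. *)
From Stdlib Require Import Reals.
From Stdlib Require Import Lra Psatz.
Open Scope R_scope.

Lemma discriminant_pos (tauL deltaL : R) :
  tauL > deltaL + 1 -> deltaL > 0 -> 0 < tauL ^ 2 - 4 * deltaL.
Proof.
  intros Htau Hdelta.
  replace (tauL ^ 2 - 4 * deltaL)
    with ((tauL - deltaL - 1) * (tauL + deltaL + 1) + (deltaL - 1) ^ 2) by ring.
  pose proof (pow2_ge_0 (deltaL - 1)).
  assert (0 < (tauL - deltaL - 1) * (tauL + deltaL + 1)) by (apply Rmult_lt_0_compat; lra).
  lra.
Qed.

Lemma lamL_sum (tauL deltaL : R) : lamLu tauL deltaL + lamLs tauL deltaL = tauL.
Proof. unfold lamLu, lamLs. field. Qed.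

Lemma lamL_prod (tauL deltaL : R) :
  0 <= tauL ^ 2 - 4 * deltaL -> lamLu tauL deltaL * lamLs tauL deltaL = deltaL.
Proof.
  intros Hdisc. unfold lamLu, lamLs.
  pose proof (sqrt_sqrt _ Hdisc) as Hsq.
  nra.
Qed.

Lemma lamLs_le_lamLu (tauL deltaL : R) : lamLs tauL deltaL <= lamLu tauL deltaL.
Proof.
  unfold lamLu, lamLs.
  pose proof (sqrt_pos (tauL ^ 2 - 4 * deltaL)).
  lra.
Qed.

Lemma lamLs_lt_1_lt_lamLu (tauL deltaL : R) :
  tauL > deltaL + 1 -> 0 <= tauL ^ 2 - 4 * deltaL ->
  lamLs tauL deltaL < 1 < lamLu tauL deltaL.
Proof.
  intros Htau Hdisc.
  pose proof (lamL_sum tauL deltaL) as Hsum.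
  pose proof (lamL_prod tauL deltaL Hdisc) as Hprod.
  pose proof (lamLs_le_lamLu tauL deltaL).
  assert (Hsplit : (lamLu tauL deltaL - 1) * (lamLs tauL deltaL - 1) < 0) by nra.
  split; nra.
Qed.

Lemma lamLs_pos (tauL deltaL : R) :
  tauL > deltaL + 1 -> deltaL > 0 -> 0 < lamLs tauL deltaL.
Proof.
  intros Htau Hdelta.
  pose proof (Rlt_le _ _ (discriminant_pos _ _ Htau Hdelta)) as Hdisc.
  pose proof (lamL_prod _ _ Hdisc).
  pose proof (lamLs_lt_1_lt_lamLu _ _ Htau Hdisc).
  nra.
Qed.

Lemma deltaR_bound_of_phi_pos (u s deltaL tauR deltaR : R) :
  u * s = deltaL -> 1 < u -> tauR < - (deltaR + 1) ->
  deltaR - (tauR + deltaL + deltaR - (1 + tauR) * u) * u > 0 ->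
  deltaR * (u ^ 2 - 1) < u - s * u ^ 2.
Proof.
  intros Hprod Hu HtauR Hphi. subst deltaL.
  assert (Hexpand : deltaR - (tauR + u * s + deltaR - (1 + tauR) * u) * u
                    = tauR * u * (u - 1) - deltaR * (u - 1) + u ^ 2 - s * u ^ 2)
    by ring.
  assert (HtauR_u : tauR * u * (u - 1) < - (deltaR + 1) * u * (u - 1)).
  { assert (0 < u * (u - 1)) by nra. nra. }
  nra.
Qed.

Lemma twice_deltaR_lt (u s tauL deltaR : R) :
  u + s = tauL -> 1 < u -> 0 < s -> deltaR * (u ^ 2 - 1) < u - s * u ^ 2 ->
  s + 2 * tauL / (u ^ 2 - 1) > 2 * deltaR.
Proof.
  intros Hsum Hu Hs Hbound. subst tauL.
  assert (Hden : 0 < u ^ 2 - 1) by nra.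
  apply Rmult_lt_reg_r with (u ^ 2 - 1); [exact Hden |].
  replace ((s + 2 * (u + s) / (u ^ 2 - 1)) * (u ^ 2 - 1))
    with (s * (u ^ 2 - 1) + 2 * (u + s)) by (field; lra).
  nra.
Qed.

Theorem lemma4p4 (tauL deltaL tauR deltaR : R) :
  in_Phi_BYG tauL deltaL tauR deltaR ->
  m_crit tauL deltaL > 2 * deltaR.
Proof.
  intros [[HtauL [HdeltaL [HtauR _]]] Hphi].
  pose proof (Rlt_le _ _ (discriminant_pos _ _ HtauL HdeltaL)) as Hdisc.
  destruct (lamLs_lt_1_lt_lamLu _ _ HtauL Hdisc) as [_ Hu].
  apply (twice_deltaR_lt _ _ _ _ (lamL_sum tauL deltaL) Hu).
  - exact (lamLs_pos _ _ HtauL HdeltaL).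
  - exact (deltaR_bound_of_phi_pos _ _ _ _ _ (lamL_prod _ _ Hdisc) Hu HtauR Hphi).
Qed.
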